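(* Let the pumping $A_p:\mathbb R\to\mathbb R$ be continuous and $T$-periodic. Consider the Maxwell--Bloch system on $\mathbb X=\mathbb R^2\times S^3$, \[ \dot A=B,\quad \dot B=-\Omega^2A-\sigma B+cj,\quad i\hbar\dot C_1=\hbar\omega_1C_1+iaC_2,\quad i\hbar\dot C_2=\hbar\omega_2C_2-iaC_1, \] with $j=2q\,\mathrm{Im}[\overline{C_1}C_2]$, $a(t)=\frac qc[A(t)+A_p(t)]$, its reduced dynamics $\dot Y=F(Y,t)$ on $\mathbb Y=\mathbb R^2\times S^2$, and let $U(t):\mathbb Y\to\mathbb Y$ be the map sending $Y(0)$ to $Y(t)$ for solutions of the reduced dynamics. Then the set $\Phi=\{Y_\#\in\mathbb Y: U(T)Y_\#=Y_\#\}$ of fixed points of the Poincaré map $U(T)$ is bounded in $\mathbb Y$.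
   Context: Parameters: $\Omega,\sigma,c,\hbar,p>0$, real $\omega_2>\omega_1$, $\omega=\omega_2-\omega_1$, $q=\omega p$. $S^3=\{C=(C_1,C_2)\in\mathbb C^2:|C_1|^2+|C_2|^2=1\}$. $U(1)$ acts on $\mathbb X$ by $(A,B,C)\mapsto(A,B,e^{i\theta}C)$, commuting with the flow. The map $\Pi(A,B,C)=(A,B,h(C))$, with $h:S^3\to S^2$ the Hopf fibration, identifies $\mathbb X/U(1)$ with $\mathbb Y=\mathbb R^2\times S^2$; the reduced dynamics is the induced time-dependent vector field on $\mathbb Y$, and boundedness refers to the $\mathbb R^2$ component $(A,B)$ (the $S^2$ factor is compact). *)

From Stdlib Require Import Reals.
From Coquelicot Require Import Coquelicot.

Open Scope R_scope.

Definition qMB (omega1 omega2 p : R) : R := (omega2 - omega1) * p.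

Definition jMB (q : R) (C1 C2 : C) : R := 2 * q * Im (Cmult (Cconj C1) C2).

Definition aMB (q c : R) (Ap A : R -> R) (t : R) : R := q / c * (A t + Ap t).

Definition on_S3 (C1 C2 : C) : Prop := Cmod C1 ^ 2 + Cmod C2 ^ 2 = 1.

(* Hopf fibration h : S^3 -> S^2 subset R^3; h C = h C' iff C' = e^{i theta} C on S^3 *)
Definition hopf (C1 C2 : C) : R * R * R :=
  (2 * Re (Cmult (Cconj C1) C2), 2 * Im (Cmult (Cconj C1) C2),
   Cmod C1 ^ 2 - Cmod C2 ^ 2).

Definition MB_solution (Omega sigma c hbar p omega1 omega2 : R) (Ap : R -> R)
    (A B : R -> R) (C1 C2 : R -> C) : Prop :=
  let q := qMB omega1 omega2 p in
  forall t : R,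
    on_S3 (C1 t) (C2 t) /\
    is_derive A t (B t) /\
    is_derive B t (- Omega ^ 2 * A t - sigma * B t + c * jMB q (C1 t) (C2 t)) /\
    (exists dC1 : C, is_derive C1 t dC1 /\
       Cmult (Cmult Ci (RtoC hbar)) dC1 =
       Cplus (Cmult (RtoC (hbar * omega1)) (C1 t))
             (Cmult (Cmult Ci (RtoC (aMB q c Ap A t))) (C2 t))) /\
    (exists dC2 : C, is_derive C2 t dC2 /\
       Cmult (Cmult Ci (RtoC hbar)) dC2 =
       Cminus (Cmult (RtoC (hbar * omega2)) (C2 t))
              (Cmult (Cmult Ci (RtoC (aMB q c Ap A t))) (C1 t))).

(* Points of Y = R^2 x S^2 (S^2 as the image of hopf in R^3). *)
Definition Ypt : Type := (R * R * (R * R * R))%type.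

Definition PiMB (A B : R) (C1 C2 : C) : Ypt := (A, B, hopf C1 C2).

(* Y# is a fixed point of the Poincare map U(T) of the reduced dynamics:
   the reduced trajectory through Y# is the projection of a lifted solution
   of the full system, and U(T) Y# = Y#. *)
Definition poincare_fixed (Omega sigma c hbar p omega1 omega2 T : R)
    (Ap : R -> R) (Y : Ypt) : Prop :=
  exists (A B : R -> R) (C1 C2 : R -> C),
    MB_solution Omega sigma c hbar p omega1 omega2 Ap A B C1 C2 /\
    PiMB (A 0) (B 0) (C1 0) (C2 0) = Y /\
    PiMB (A T) (B T) (C1 T) (C2 T) = Y.

(** The cross term in the energy [E = B^2 + Omega^2 A^2 + d A B] of the damped,
    driven oscillator [A'' + sigma A' + Omega^2 A = c j] makes it decay at a
    definite rate, [E' <= - alpha E + beta], where [beta] only depends on the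
    bound [|j| <= q] that holds because [(C1, C2)] stays on the unit sphere.
    Along a [T]-periodic reduced orbit [E] takes the same value at [0] and [T],
    and comparison with [exp (- alpha t)] forces [E(0) <= beta / alpha]:
    all fixed points of the Poincare map lie in one ellipse in the [(A, B)]-plane. *)

From Stdlib Require Import Reals Lra Psatz.
From Coquelicot Require Import Coquelicot.
Open Scope R_scope.

Lemma Im_conj_mul_sq_le (z w : C) :
  Cmod z ^ 2 + Cmod w ^ 2 = 1 -> 4 * Im (Cmult (Cconj z) w) ^ 2 <= 1.
Proof.
  rewrite !Cmod2_alt; destruct z as [x1 y1], w as [x2 y2]; simpl; intros hS.
  set (I := x1 * y2 + - y1 * x2).
  assert (hCS : I ^ 2 <= (x1 ^ 2 + y1 ^ 2) * (x2 ^ 2 + y2 ^ 2)).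
  { assert (0 <= (x1 * x2 + y1 * y2) ^ 2) by apply pow2_ge_0. unfold I; nra. }
  assert (0 <= (x1 ^ 2 + y1 ^ 2 - (x2 ^ 2 + y2 ^ 2)) ^ 2) by apply pow2_ge_0.
  nra.
Qed.

Lemma jMB_sq_le (q : R) (C1 C2 : C) : on_S3 C1 C2 -> jMB q C1 C2 ^ 2 <= q ^ 2.
Proof.
  intros hS%Im_conj_mul_sq_le; unfold jMB.
  replace ((2 * q * Im (Cmult (Cconj C1) C2)) ^ 2)
    with (q ^ 2 * (4 * Im (Cmult (Cconj C1) C2) ^ 2)) by ring.
  assert (0 <= q ^ 2) by apply pow2_ge_0. nra.
Qed.

Lemma young_ineq (e x y : R) : 0 < e -> 2 * x * y <= e * x ^ 2 + y ^ 2 / e.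
Proof.
  intros he.
  assert (hsq : 0 <= e * (x - y / e) ^ 2)
    by (apply Rmult_le_pos; [lra | apply pow2_ge_0]).
  replace (e * (x - y / e) ^ 2) with (e * x ^ 2 - 2 * x * y + y ^ 2 / e) in hsq
    by (field; lra).
  lra.
Qed.

Lemma exists_damping_coupling (Omega sigma : R) :
  0 < Omega -> 0 < sigma ->
  exists d, 0 < d /\ d <= sigma /\ d <= Omega /\ d * sigma <= Omega ^ 2.
Proof.
  intros hO hs.
  assert (hq : 0 < Omega ^ 2 / sigma) by (apply Rdiv_lt_0_compat; nra).
  exists (Rmin sigma (Rmin Omega (Omega ^ 2 / sigma))).
  pose proof (Rmin_l sigma (Rmin Omega (Omega ^ 2 / sigma))) as h1.
  pose proof (Rmin_r sigma (Rmin Omega (Omega ^ 2 / sigma))) as h2.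
  pose proof (Rmin_l Omega (Omega ^ 2 / sigma)) as h3.
  pose proof (Rmin_r Omega (Omega ^ 2 / sigma)) as h4.
  repeat split; try lra.
  - apply Rmin_pos; [lra | apply Rmin_pos; lra].
  - apply (Rmult_le_reg_r (/ sigma)); [apply Rinv_0_lt_compat; lra |].
    rewrite Rmult_assoc, Rinv_r; [|lra]. unfold Rdiv in h4. lra.
Qed.

Section DampedOscillator.

Variables (Omega sigma d : R).

Definition energy (a b : R) : R := b * b + Omega ^ 2 * (a * a) + d * (a * b).

Definition energy_rate (a b db : R) : R :=
  2 * b * db + Omega ^ 2 * (2 * a * b) + d * (b * b + a * db).

Hypotheses (hOmega : 0 < Omega) (hsigma : 0 < sigma) (hd : 0 < d)
  (hd_sigma : d <= sigma) (hd_Omega : d <= Omega) (hd_sigma_Omega : d * sigma <= Omega ^ 2).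

Lemma energy_bounds (a b : R) :
  / 2 * (b * b + Omega ^ 2 * (a * a)) <= energy a b <=
  3 / 2 * (b * b + Omega ^ 2 * (a * a)).
Proof.
  unfold energy.
  assert (0 <= (b + d * a) ^ 2) by apply pow2_ge_0.
  assert (0 <= (b - d * a) ^ 2) by apply pow2_ge_0.
  assert (0 <= (Omega ^ 2 - d ^ 2) * a ^ 2) by (apply Rmult_le_pos; [nra | apply pow2_ge_0]).
  split; nra.
Qed.

Lemma abs_le_of_energy_le (a b E : R) :
  energy a b <= E ->
  Rabs a <= 1 + 2 * E + 2 * E / Omega ^ 2 /\ Rabs b <= 1 + 2 * E + 2 * E / Omega ^ 2.
Proof.
  intros hE. destruct (energy_bounds a b) as [hlow _].
  assert (hOmega2 : 0 < Omega ^ 2) by nra.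
  assert (hb : b * b <= 2 * E) by nra.
  assert (ha : a * a <= 2 * E / Omega ^ 2).
  { apply (Rmult_le_reg_r (Omega ^ 2)); [lra |].
    replace (2 * E / Omega ^ 2 * Omega ^ 2) with (2 * E) by (field; lra). nra. }
  assert (habs : forall x, Rabs x <= 1 + x * x)
    by (intros x; unfold Rabs; destruct (Rcase_abs x); nra).
  pose proof (habs a). pose proof (habs b).
  assert (0 <= 2 * E / Omega ^ 2) by (apply Rdiv_le_0_compat; nra).
  split; nra.
Qed.

Lemma energy_rate_le (K2 a b f : R) :
  f ^ 2 <= K2 ->
  energy_rate a b (- Omega ^ 2 * a - sigma * b + f) <=
  - (d / 6) * energy a b + K2 * (4 / sigma + d / Omega ^ 2).
Proof.
  intros hf.
  assert (hOmega2 : 0 < Omega ^ 2) by nra.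
  assert (cross : - (d * sigma * a * b) <= sigma / 2 * b ^ 2 + d * Omega ^ 2 / 2 * a ^ 2).
  { assert (0 <= sigma / 2 * (b + d * a) ^ 2)
      by (apply Rmult_le_pos; [lra | apply pow2_ge_0]).
    assert (0 <= d / 2 * (Omega ^ 2 - sigma * d) * a ^ 2)
      by (apply Rmult_le_pos; [apply Rmult_le_pos; lra | apply pow2_ge_0]).
    nra. }
  pose proof (young_ineq (sigma / 4) b f ltac:(lra)) as forcing_b.
  pose proof (young_ineq (Omega ^ 2 / 2) a f ltac:(lra)) as forcing_a.
  assert (hK : f ^ 2 * (4 / sigma + d / Omega ^ 2) <= K2 * (4 / sigma + d / Omega ^ 2)).
  { apply Rmult_le_compat_r; [|lra].
    assert (0 < 4 / sigma) by (apply Rdiv_lt_0_compat; lra).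
    assert (0 < d / Omega ^ 2) by (apply Rdiv_lt_0_compat; lra). lra. }
  destruct (energy_bounds a b) as [_ hE].
  replace (f ^ 2 / (sigma / 4)) with (4 * f ^ 2 / sigma) in forcing_b by (field; lra).
  replace (f ^ 2 / (Omega ^ 2 / 2)) with (2 * f ^ 2 / Omega ^ 2) in forcing_a
    by (field; lra).
  replace (f ^ 2 * (4 / sigma + d / Omega ^ 2))
    with (4 * f ^ 2 / sigma + d * (2 * f ^ 2 / Omega ^ 2) / 2) in hK by (field; lra).
  unfold energy_rate.
  assert (0 <= (sigma - d) * b ^ 2) by (apply Rmult_le_pos; [lra | apply pow2_ge_0]).
  assert (0 <= d * (a * a)) by (apply Rmult_le_pos; nra).
  nra.
Qed.

End DampedOscillator.

Lemma is_derive_eq (f : R -> R) (x l l' : R) : is_derive f x l -> l = l' -> is_derive f x l'.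
Proof. intros h <-; exact h. Qed.

Lemma is_derive_energy (Omega d : R) (A B : R -> R) (t dB : R) :
  is_derive A t (B t) -> is_derive B t dB ->
  is_derive (fun s => energy Omega d (A s) (B s)) t (energy_rate Omega d (A t) (B t) dB).
Proof.
  intros hA hB.
  pose proof (is_derive_mult B B t _ _ hB hB Rmult_comm) as hBB.
  pose proof (is_derive_scal _ _ (Omega ^ 2) _
                (is_derive_mult A A t _ _ hA hA Rmult_comm)) as hAA.
  pose proof (is_derive_scal _ _ d _ (is_derive_mult A B t _ _ hA hB Rmult_comm)) as hAB.
  eapply is_derive_eq.
  - exact (is_derive_plus _ _ _ _ _ (is_derive_plus _ _ _ _ _ hBB hAA) hAB).
  - unfold energy_rate, plus, mult; simpl. ring.
Qed.

(* [exp (alpha t) (V t - beta / alpha)] is nonincreasing, and periodicity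
   compares its values at [0] and [T]. *)
Lemma periodic_le_of_dissipative (V dV : R -> R) (alpha beta T : R) :
  0 < alpha -> 0 < T ->
  (forall t, is_derive V t (dV t)) ->
  (forall t, dV t <= - alpha * V t + beta) ->
  V T = V 0 -> V 0 <= beta / alpha.
Proof.
  intros ha hT hV hdV hper.
  pose (G t := exp (alpha * t) * (V t - beta / alpha)).
  pose (dG t := exp (alpha * t) * (alpha * (V t - beta / alpha) + dV t)).
  assert (hG : forall t, is_derive G t (dG t)).
  { intros t.
    pose proof (is_derive_comp exp (fun s => alpha * s) t _ _ (is_derive_exp _)
                  (is_derive_scal _ _ alpha _ (is_derive_id t))) as hexp.
    pose proof (is_derive_minus _ _ t _ _ (hV t) (is_derive_const (beta / alpha) t))
      as hshift.
    eapply is_derive_eq.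
    - exact (is_derive_mult _ _ t _ _ hexp hshift Rmult_comm).
    - unfold dG, minus, plus, opp, mult, scal, zero, one; simpl.
      unfold mult, one; simpl. ring. }
  assert (hdG : forall t, dG t <= 0).
  { intros t. pose proof (hdV t). pose proof (exp_pos (alpha * t)). unfold dG.
    replace (alpha * (V t - beta / alpha) + dV t) with (alpha * V t - beta + dV t)
      by (field; lra).
    nra. }
  destruct (MVT_cor3 G dG 0 T hT) as [xi [_ [_ hMVT]]].
  { intros x _ _. apply is_derive_Reals, hG. }
  assert (hexpT : 1 < exp (alpha * T))
    by (rewrite <- exp_0; apply exp_increasing; nra).
  pose proof (hdG xi) as hxi.
  unfold G in hMVT. rewrite hper, Rmult_0_r, exp_0 in hMVT. nra.
Qed.

Lemma forcing_sq_le (c q : R) (C1 C2 : C) :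
  on_S3 C1 C2 -> (c * jMB q C1 C2) ^ 2 <= (c * q) ^ 2.
Proof.
  intros hS%(jMB_sq_le q). rewrite !Rpow_mult_distr.
  apply Rmult_le_compat_l; [apply pow2_ge_0 | exact hS].
Qed.

Theorem lemma4p2 (Omega sigma c hbar p omega1 omega2 T : R) (Ap : R -> R) :
  0 < Omega -> 0 < sigma -> 0 < c -> 0 < hbar -> 0 < p -> omega1 < omega2 ->
  0 < T ->
  (forall t : R, continuity_pt Ap t) ->
  (forall t : R, Ap (t + T) = Ap t) ->
  exists M : R, forall Y : Ypt,
    poincare_fixed Omega sigma c hbar p omega1 omega2 T Ap Y ->
    Rabs (fst (fst Y)) <= M /\ Rabs (snd (fst Y)) <= M.
Proof.
  intros hOmega hsigma _ _ _ _ hT _ _.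
  destruct (exists_damping_coupling Omega sigma hOmega hsigma) as (d & hd & hd1 & hd2 & hd3).
  set (q := qMB omega1 omega2 p).
  set (alpha := d / 6).
  set (beta := (c * q) ^ 2 * (4 / sigma + d / Omega ^ 2)).
  exists (1 + 2 * (beta / alpha) + 2 * (beta / alpha) / Omega ^ 2).
  intros Y (A & B & C1 & C2 & hsol & hY0 & hYT).
  assert (hper : A T = A 0 /\ B T = B 0).
  { rewrite <- hYT in hY0. injection hY0. auto. }
  rewrite <- hY0; simpl.
  apply (abs_le_of_energy_le Omega d); [exact hOmega | exact hd | exact hd2 |].
  apply (periodic_le_of_dissipative (fun t => energy Omega d (A t) (B t))
    (fun t => energy_rate Omega d (A t) (B t)
                (- Omega ^ 2 * A t - sigma * B t + c * jMB q (C1 t) (C2 t))) _ _ T);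
    [unfold alpha; lra | exact hT | | | now rewrite (proj1 hper), (proj2 hper)].
  - intros t. destruct (hsol t) as (_ & hA & hB & _). now apply is_derive_energy.
  - intros t. destruct (hsol t) as (hS & _).
    apply (energy_rate_le Omega sigma d); auto. now apply forcing_sq_le.
Qed.
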